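(* Let $0<a<1$ and $r>0$. For $0\leq t\leq 1$ set $\Delta_t=\{(z,w)\in\mathbb{C}^2:|z|<(1+t)r,\ |w|<(1+2t)r\}$ and \[ F_t(z,w)=\big((1-t)z^2+(a+rt)w,\ az\big),\qquad \Omega_t=F_t(\Delta_t). \] Then: (i) $\Omega_t\subset\subset\Omega_s$ whenever $0\leq t<s\leq1$; (ii) $\Omega_t=\bigcup_{0\leq t'<t}\Omega_{t'}$ for every $0<t\leq 1$; (iii) $\overline{\Omega_t}=\bigcap_{t<s\leq1}\Omega_s$ for every $0\leq t<1$. *)

(* Complex numbers are mathcomp-real-closed's
   [R[i]] (= complex R) over an abstract [R : realType]; the Euclidean
   topology on C is the one mathcomp-analysis puts on the regular
   numField [R[i]^o], and C^2 carries the product topology. *)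
From HB Require Import structures.
From mathcomp Require Import all_boot all_order all_algebra.
From mathcomp Require Import all_classical all_reals all_analysis.
From mathcomp Require Import complex.
Import Order.TTheory GRing.Theory Num.Theory.
Import numFieldTopology.Exports numFieldNormedType.Exports.
Local Open Scope classical_set_scope.
Local Open Scope ring_scope.
Local Open Scope complex_scope.

Set Implicit Arguments.
Unset Strict Implicit.
Unset Printing Implicit Defensive.

Notation Cplx R := ((complex R)^o).

Definition compactly_contained (T : topologicalType) (A B : set T) : Prop :=
  compact (closure A) /\ closure A `<=` B.

Definition Delta (R : realType) (r t : R) : set (Cplx R * Cplx R) :=
  [set p | `|(p.1 : R[i])| < ((1 + t) * r)%:C /\ `|(p.2 : R[i])| < ((1 + 2 * t) * r)%:C].

Definition Fmap (R : realType) (a r t : R) (p : Cplx R * Cplx R) : Cplx R * Cplx R :=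
  (((1 - t)%:C * (p.1 : R[i]) ^+ 2 + (a + r * t)%:C * (p.2 : R[i]) : R[i]) : Cplx R,
   ((a%:C * (p.1 : R[i])) : R[i]) : Cplx R).

Definition Omega (R : realType) (a r t : R) : set (Cplx R * Cplx R) :=
  Fmap a r t @` Delta r t.

From HB Require Import structures.
From mathcomp Require Import all_boot all_order all_algebra.
From mathcomp Require Import all_classical all_reals all_analysis.
From mathcomp Require Import complex.
From mathcomp Require Import ring lra.
Import Order.TTheory GRing.Theory Num.Theory.
Import numFieldTopology.Exports numFieldNormedType.Exports.
Local Open Scope classical_set_scope.
Local Open Scope ring_scope.
Local Open Scope complex_scope.
Set Implicit Arguments.
Unset Strict Implicit.
Unset Printing Implicit Defensive.

(* The proof compares every Ω_t with K_t = F_t(cl Δ_t), the image of the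
   closed polydisc.
   - Topology: K_t is compact (continuous image of a product of closed disks),
     hence closed, so closure Ω_t ⊆ K_t; conversely every point of cl Δ_t is a
     limit of points of Δ_t, so K_t ⊆ closure Ω_t.  Thus closure Ω_t = K_t.
   - Algebra: F_t is injective, and F_s(z,w) = F_t(z, reparam s t z w) for an
     explicit second coordinate; estimating its modulus gives
       K_t' ⊆ Ω_t for t' < t                        (forward_room),
       Ω_t ⊆ ⋃_{t'<t} Ω_t'                           (backward_room),
       ⋂_{s>t} Ω_s ⊆ K_t                            (letting s decrease to t).
   The three claims of the theorem follow at once: (i) from closure Ω_t = K_t
   ⊆ Ω_s, (ii) from the second and first inclusions, (iii) from the first and
   third ones. *)

Section RealFacts.
Variable R : realType.

Lemma small_parameter (t G H X Y : R) : 0 < t -> 0 < G -> 0 < H ->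
  0 <= X -> 0 <= Y -> exists d, [/\ 0 < d, d <= t, d * X < G & d * Y < H].
Proof.
move=> t0 G0 H0 X0 Y0.
pose u := G / (X + 1); pose v := H / (Y + 1).
have u0 : 0 < u by rewrite divr_gt0 // ltr_wpDl.
have v0 : 0 < v by rewrite divr_gt0 // ltr_wpDl.
have uE : u * (X + 1) = G by rewrite /u mulfVK // gt_eqF // ltr_wpDl.
have vE : v * (Y + 1) = H by rewrite /v mulfVK // gt_eqF // ltr_wpDl.
exists (Num.min t (Num.min u v)).
have ht : Num.min t (Num.min u v) <= t by rewrite ge_min lexx.
have hu : Num.min t (Num.min u v) <= u by rewrite !ge_min lexx orbT.
have hv : Num.min t (Num.min u v) <= v by rewrite !ge_min lexx !orbT.
have h0 : 0 < Num.min t (Num.min u v) by rewrite !lt_min t0 u0 v0.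
by split => //; nra.
Qed.

Lemma le_of_le_small_slack (x y K d : R) : 0 < d -> 0 <= K ->
  (forall e, 0 < e -> e <= d -> x <= y + e * K) -> x <= y.
Proof.
move=> d0 K0 slack; rewrite leNgt; apply/negP => yx.
have xy0 : 0 < x - y by rewrite subr_gt0.
have [e [e0 ed eK _]] := @small_parameter d (x - y) 1 K 0 d0 xy0 ltr01 K0 (lexx 0).
by have := slack e e0 ed; lra.
Qed.

End RealFacts.

Section ComplexModulus.
Variable R : realType.
Implicit Types (x y : R) (z u : R[i]).

(* The modulus of a complex number, as a real number: |z| = (modulus z)%:C. *)
Definition modulus z : R := Normc.normc z.

Lemma modulusE z : `|z| = (modulus z)%:C. Proof. by case: z. Qed.

Lemma modulus_ge0 z : 0 <= modulus z. Proof. by case: z => *; exact: sqrtr_ge0. Qed.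

Lemma modulus_lt z x : (`|z| < x%:C) = (modulus z < x).
Proof. by rewrite modulusE ltcR. Qed.

Lemma modulus_real x : modulus x%:C = `|x|.
Proof. by rewrite /modulus /Normc.normc /= expr0n /= addr0 sqrtr_sqr. Qed.

Lemma modulusM z u : modulus (z * u) = modulus z * modulus u.
Proof. exact: Normc.normcM. Qed.

Lemma modulusV z : modulus z^-1 = (modulus z)^-1.
Proof. exact: Normc.normcV. Qed.

Lemma modulusD z u : modulus (z + u) <= modulus z + modulus u.
Proof. exact: le_normcD. Qed.

Lemma modulus_Re z : `|complex.Re z| <= modulus z.
Proof. case: z => x y; rewrite -sqrtr_sqr /=; apply: ler_wsqrtr; by rewrite lerDl sqr_ge0. Qed.

Lemma modulus_Im z : `|complex.Im z| <= modulus z.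
Proof. case: z => x y; rewrite -sqrtr_sqr /=; apply: ler_wsqrtr; by rewrite lerDr sqr_ge0. Qed.

Lemma modulus_coord x y : modulus (x +i* y) <= `|x| + `|y|.
Proof.
have -> : x +i* y = x%:C + 'i * y%:C by rewrite [LHS]complexE.
apply: le_trans (modulusD _ _) _.
by rewrite modulusM !modulus_real /modulus /Normc.normc /= expr0n expr1n add0r sqrtr1 mul1r.
Qed.

(* The modulus is 1-Lipschitz, hence continuous on the complex plane. *)
Lemma modulus_continuous : continuous (fun z : Cplx R => modulus z).
Proof.
move=> z B /nbhs_ballP [e /= e0 zeB]; apply/nbhs_ballP.
exists e%:C; first by rewrite /= ltcR.
move=> u; rewrite -ball_normE /= modulus_lt => zu; apply: zeB.
rewrite -ball_normE /=.
exact: le_lt_trans (@ler_dist_dist R (Rcomplex R) z u) zu.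
Qed.

Definition disk x : set (Cplx R) := [set z | modulus z <= x].

Lemma disk_closed x : closed (disk x).
Proof.
have -> : disk x = (fun z : Cplx R => modulus z) @^-1` [set y | y <= x] by [].
by apply: preimage_closed; [move=> z _; exact: modulus_continuous | exact: closed_le].
Qed.

Definition complex_of_pair (p : R * R) : Cplx R := p.1 +i* p.2.

(* |x + iy| <= |x| + |y| makes this identification continuous. *)
Lemma complex_of_pair_continuous : continuous complex_of_pair.
Proof.
move=> p B /nbhs_ballP [[e e']] /=; rewrite ltcE /= => /andP [/eqP e'0 e0].
subst e' => peB; apply/nbhs_ballP; exists (e / 2); first by rewrite /= divr_gt0.
move=> q; rewrite /ball /= /prod_ball -!ball_normE /= => -[q1 q2].
apply: peB; rewrite -ball_normE /= modulus_lt.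
apply: le_lt_trans (modulus_coord _ _) _; lra.
Qed.

(* Heine-Borel for disks: a disk is a closed subset of the image of a
   compact square. *)
Lemma disk_compact x : compact (disk x).
Proof.
apply: (@subclosed_compact _ _ (complex_of_pair @` (`[- x, x] `*` `[- x, x]))).
- exact: disk_closed.
- apply: continuous_compact.
    exact: continuous_subspaceT complex_of_pair_continuous.
  exact: compact_setX (@segment_compact R _ _) (@segment_compact R _ _).
- move=> z zx; exists (complex.Re z, complex.Im z); last by case: z {zx}.
  split; rewrite /= in_itv /= -ler_norml.
    exact: le_trans (modulus_Re z) zx.
  exact: le_trans (modulus_Im z) zx.
Qed.

End ComplexModulus.

Lemma continuous_image_closure (T U : topologicalType) (f : T -> U) (A : set T) :
  continuous f -> f @` closure A `<=` closure (f @` A).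
Proof.
move=> fc _ [x Ax <-] B fxB; have [y [Ay By]] := Ax _ (fc x B fxB).
by exists (f y); split; first exists y.
Qed.

Lemma nbhs_polydisc (R : realType) (p : Cplx R * Cplx R) (B : set (Cplx R * Cplx R)) :
  nbhs p B -> exists2 e : R, 0 < e & forall q : Cplx R * Cplx R,
    modulus ((p.1 : R[i]) - q.1) < e -> modulus ((p.2 : R[i]) - q.2) < e -> B q.
Proof.
move=> /nbhs_ballP [[e e']] /=; rewrite ltcE /= => /andP [/eqP e'0 e0].
subst e' => peB; exists e => // q q1 q2; apply: peB.
by rewrite /ball /= /prod_ball -!ball_normE /= !modulus_lt.
Qed.

Definition cDelta (R : realType) (r t : R) : set (Cplx R * Cplx R) :=
  disk ((1 + t) * r) `*` disk ((1 + 2 * t) * r).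

Definition cOmega (R : realType) (a r t : R) : set (Cplx R * Cplx R) :=
  Fmap a r t @` cDelta r t.

Section Deformation.
Variables (R : realType) (a r : R).
Hypotheses (a0 : 0 < a) (r0 : 0 < r).

Lemma DeltaE t (z w : R[i]) :
  Delta r t (z, w) <-> modulus z < (1 + t) * r /\ modulus w < (1 + 2 * t) * r.
Proof. by rewrite /Delta /= !modulus_lt. Qed.

Lemma Delta_sub_cDelta t : Delta r t `<=` cDelta r t.
Proof. by case=> z w /DeltaE [hz hw]; split; apply: ltW. Qed.

Lemma Omega_sub_cOmega t : Omega a r t `<=` cOmega a r t.
Proof. by move=> _ [q qD <-]; exists q => //; exact: Delta_sub_cDelta. Qed.

Lemma Fmap_continuous t : continuous (Fmap a r t).
Proof.
move=> p; rewrite /Fmap /continuous_at.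
apply: (@cvg_pair _ (Cplx R) (Cplx R) (nbhs p) (nbhs _) (nbhs _) _ _ _
  (fun q => _) (fun q => _)) => /=.
  apply: cvgD; apply: cvgM; try exact: cvg_cst.
    by rewrite expr2; apply: cvgM; exact: cvg_fst.
  exact: cvg_snd.
by apply: cvgM; [exact: cvg_cst | exact: cvg_fst].
Qed.

Lemma cOmega_compact t : compact (cOmega a r t).
Proof.
apply: (continuous_compact (continuous_subspaceT (@Fmap_continuous t))).
by apply: compact_setX; apply: disk_compact.
Qed.

(* K_t is closed and contains Ω_t, hence contains its closure. *)
Lemma closure_Omega_sub t : closure (Omega a r t) `<=` cOmega a r t.
Proof.
have cl : closed (cOmega a r t).
  exact: compact_closed (@norm_hausdorff _ (Cplx R * Cplx R)%type) (@cOmega_compact t).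
rewrite [X in _ `<=` X]((closure_id _).1 cl); exact: closureS (@Omega_sub_cOmega t).
Qed.

(* Every point of the closed polydisc is a limit of its radial contractions,
   which lie in the open polydisc. *)
Lemma cDelta_sub_closure t : 0 <= t -> cDelta r t `<=` closure (Delta r t).
Proof.
move=> t0 [z w] [/= hz hw] B /nbhs_polydisc [e e0 eB].
have [d [d0 d1 dz dw]] := small_parameter ltr01 e0 e0 (modulus_ge0 z) (modulus_ge0 w).
have contract (u : R[i]) : u - (1 - d)%:C * u = d%:C * u.
  by rewrite rmorphB rmorph1 mulrBl mul1r opprB addrC subrK.
exists ((1 - d)%:C * z, (1 - d)%:C * w); split.
  apply/DeltaE; rewrite !modulusM modulus_real ger0_norm ?subr_ge0 //.
  have ? : 0 < (1 + t) * r by rewrite mulr_gt0 // ltr_wpDr.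
  have ? : 0 < (1 + 2 * t) * r by rewrite mulr_gt0 // ltr_wpDr // mulr_ge0.
  rewrite /disk /= in hz hw; split; nra.
by apply: eB; rewrite /= contract modulusM modulus_real ger0_norm // ltW.
Qed.

(* Consequently K_t = F_t(cl Δ_t) ⊆ F_t(closure Δ_t) ⊆ closure Ω_t. *)
Lemma cOmega_sub_closure t : 0 <= t -> cOmega a r t `<=` closure (Omega a r t).
Proof.
move=> t0 _ [q qD <-]; apply: (continuous_image_closure (@Fmap_continuous t)).
by exists q => //; exact: cDelta_sub_closure.
Qed.

Lemma coef_pos t : 0 <= t -> 0 < a + r * t.
Proof. by move=> t0; rewrite ltr_pwDl // mulr_ge0 // ltW. Qed.

Lemma coefC_neq0 t : 0 <= t -> (a + r * t)%:C != 0 :> R[i].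
Proof. by move=> t0; rewrite fmorph_eq0 gt_eqF // coef_pos. Qed.

(* Changing the parameter from s to t: the point F_s(z, w) is also
   F_t(z, reparam s t z w), with the same first coordinate z. *)
Definition reparam (s t : R) (z w : R[i]) : R[i] :=
  ((t - s)%:C * z ^+ 2 + (a + r * s)%:C * w) / (a + r * t)%:C.

Lemma Fmap_reparam s t z w : 0 <= t ->
  Fmap a r s (z, w) = Fmap a r t (z, reparam s t z w).
Proof.
move=> t0; rewrite /Fmap /reparam /=; congr (_, _).
rewrite [(a + r * t)%:C * _]mulrC divfK ?coefC_neq0 // addrA -mulrDl -rmorphD /=.
by congr (_%:C * _ + _); ring.
Qed.

Lemma reparam_bound s t z w : 0 <= s -> 0 <= t ->
  (a + r * t) * modulus (reparam s t z w) <= `|t - s| * modulus z ^+ 2 + (a + r * s) * modulus w.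
Proof.
move=> s0 t0; have ct := coef_pos t0; have cs := coef_pos s0.
rewrite /reparam modulusM modulusV modulus_real ger0_norm ?(ltW ct) //.
rewrite mulrCA divff ?gt_eqF // mulr1.
by apply: le_trans (modulusD _ _) _; rewrite !modulusM !modulus_real -expr2 (ger0_norm (ltW cs)).
Qed.

(* F_t is injective: z is recovered from the second coordinate a z, and then
   w from the first one. *)
Lemma Fmap_inj t : 0 <= t -> injective (Fmap a r t).
Proof.
move=> t0 [z w] [z' w'] [e1 e2].
have zz : z = z' by apply: (mulfI (_ : a%:C != 0)) e2; rewrite fmorph_eq0 gt_eqF.
subst z'; congr (_, _); apply: (mulfI (coefC_neq0 t0)).
by apply: (addrI ((1 - t)%:C * z ^+ 2)).
Qed.


(* Room for increasing the parameter: the image of the closed polydisc at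
   parameter t' fits into the open polydisc at any larger parameter t. *)
Lemma forward_room t' t x y : 0 <= t' -> t' < t -> t <= 1 ->
  0 <= x -> x <= (1 + t') * r -> 0 <= y -> y <= (1 + 2 * t') * r ->
  (t - t') * x ^+ 2 + (a + r * t') * y < (a + r * t) * ((1 + 2 * t) * r).
Proof.
move=> t'0 t't t1 x0 xt' y0 yt'.
have tt0 : 0 < t - t' by rewrite subr_gt0.
have x2 : x ^+ 2 <= ((1 + t') * r) ^+ 2 by rewrite lerXn2r // nnegrE (le_trans x0 xt').
have ct' : 0 <= a + r * t' by rewrite ltW // coef_pos.
have : (a + r * t') * y <= (a + r * t') * ((1 + 2 * t') * r) by rewrite ler_wpM2l.
have : (t - t') * x ^+ 2 <= (t - t') * ((1 + t') * r) ^+ 2 by rewrite ler_wpM2l // ltW.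
have t'2 : 0 < 2 * t - t' ^+ 2 by nra.
have : 0 < (t - t') * r * (2 * a + r * (2 * t - t' ^+ 2)).
  by apply: mulr_gt0; [exact: mulr_gt0 | rewrite addr_gt0 ?mulr_gt0].
nra.
Qed.

(* K_t' ⊆ Ω_t for t' < t <= 1: keep z and reparametrize w. *)
Lemma cOmega_sub_Omega t' t : 0 <= t' -> t' < t -> t <= 1 ->
  cOmega a r t' `<=` Omega a r t.
Proof.
move=> t'0 t't t1 _ [[z w] [hz hw] <-]; rewrite /disk /= in hz hw.
have t0 : 0 <= t := le_trans t'0 (ltW t't).
rewrite (@Fmap_reparam t' t z w t0); exists (z, reparam t' t z w) => //.
apply/DeltaE; split.
  by apply: le_lt_trans hz _; rewrite ltr_pM2r // ltrD2l.
rewrite -(ltr_pM2l (coef_pos t0)).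
apply: le_lt_trans (reparam_bound z w t'0 t0) _.
by rewrite ger0_norm ?subr_ge0 ?(ltW t't) //; apply: forward_room; rewrite ?modulus_ge0.
Qed.

(* Room for decreasing the parameter: strict bounds at parameter t survive
   at some slightly smaller parameter t - d. *)
Lemma backward_room t x y : 0 < t -> 0 <= x -> x < (1 + t) * r ->
  0 <= y -> y < (1 + 2 * t) * r -> exists d, [/\ 0 < d, d <= t,
    x < (1 + (t - d)) * r &
    d * x ^+ 2 + (a + r * t) * y < (a + r * (t - d)) * ((1 + 2 * (t - d)) * r)].
Proof.
move=> t0 x0 xt y0 yt; have ct := coef_pos (ltW t0).
have G0 : 0 < (a + r * t) * ((1 + 2 * t) * r - y) by rewrite mulr_gt0 // subr_gt0.
have H0 : 0 < (1 + t) * r - x by rewrite subr_gt0.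
have X0 : 0 <= x ^+ 2 + r * (2 * (a + r * t) + r * (1 + 2 * t)).
  by apply: addr_ge0; [exact: sqr_ge0 | apply: mulr_ge0; [exact: ltW | nra]].
have [d [d0 dt dX dY]] := small_parameter t0 G0 H0 X0 (ltW r0).
exists d; split => //; first by nra.
have -> : (a + r * (t - d)) * ((1 + 2 * (t - d)) * r) = (a + r * t) * ((1 + 2 * t) * r)
   - d * r * (2 * (a + r * t) + r * (1 + 2 * t)) + 2 * (d * r) ^+ 2 by ring.
by have : 0 <= (d * r) ^+ 2 := sqr_ge0 _; nra.
Qed.

Lemma Omega_sub_earlier t : 0 < t ->
  Omega a r t `<=` \bigcup_(t' in [set t' | 0 <= t' < t]) Omega a r t'.
Proof.
move=> t0 _ [[z w] /DeltaE [hz hw] <-].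
have [d [d0 dt hz' hw']] := backward_room t0 (modulus_ge0 z) hz (modulus_ge0 w) hw.
have t'0 : 0 <= t - d by rewrite subr_ge0.
exists (t - d); first by rewrite /= t'0 ltrBlDr ltrDl.
rewrite (@Fmap_reparam t (t - d) z w t'0); exists (z, reparam t (t - d) z w) => //.
apply/DeltaE; split => //.
rewrite -(ltr_pM2l (coef_pos t'0)); apply: le_lt_trans (reparam_bound z w (ltW t0) t'0) _.
by rewrite addrAC subrr add0r normrN ger0_norm // ltW.
Qed.

(* A point lying in every Ω_s, s > t, has a single candidate preimage (z, W)
   under F_t; letting s decrease to t shows that (z, W) lies in cl Δ_t. *)
Lemma bigcap_sub_cOmega t : 0 <= t -> t < 1 ->
  \bigcap_(s in [set s | t < s <= 1]) Omega a r s `<=` cOmega a r t.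
Proof.
move=> t0 t1 p hp; have ct := coef_pos t0.
have [[z w] _ pE] := hp 1 (introT andP (conj t1 (lexx 1))).
rewrite (@Fmap_reparam 1 t z w t0) in pE; set W := reparam 1 t z w in pE.
have nearby e : 0 < e -> e <= 1 - t -> exists w', [/\ modulus z < (1 + (t + e)) * r,
    modulus w' < (1 + 2 * (t + e)) * r & reparam (t + e) t z w' = W].
  move=> e0 e1; have tes : t < t + e <= 1 by apply/andP; split; lra.
  have [[z' w'] /DeltaE [hz' hw'] pE'] := hp _ tes.
  rewrite (@Fmap_reparam (t + e) t z' w' t0) -pE in pE'.
  by case: (Fmap_inj t0 pE') => <- <-; exists w'.
have d0 : 0 < 1 - t by rewrite subr_gt0.
exists (z, W) => //; split; rewrite /disk /=.
  apply: (@le_of_le_small_slack _ _ _ r (1 - t)) (ltW r0) _ => // e e0 e1.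
  by have [w' [hz _ _]] := nearby e e0 e1; nra.
rewrite -(ler_pM2l ct).
apply: (@le_of_le_small_slack _ _ _ (modulus z ^+ 2 + r * (2 * a + 7 * r)) (1 - t)) => //.
  by rewrite addr_ge0 ?sqr_ge0 // ltW // mulr_gt0 // addr_gt0 ?mulr_gt0.
move=> e e0 e1; have [w' [_ hw' <-]] := nearby e e0 e1.
have te0 : 0 <= t + e by rewrite addr_ge0 // ltW.
apply: le_trans (reparam_bound z w' te0 t0) _.
rewrite opprD addNKr normrN ger0_norm ?(ltW e0) //.
have cte := coef_pos te0.
have : (a + r * (t + e)) * modulus w' <= (a + r * (t + e)) * ((1 + 2 * (t + e)) * r).
  by rewrite ler_wpM2l ?ltW.
nra.
Qed.

End Deformation.

Local Close Scope complex_scope.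

Theorem mainTheorem7 (R : realType) (a r : R) (ha : 0 < a < 1) (hr : 0 < r) :
  (forall t s : R, 0 <= t -> t < s -> s <= 1 ->
     compactly_contained (Omega a r t) (Omega a r s)) /\
  (forall t : R, 0 < t <= 1 ->
     Omega a r t = \bigcup_(t' in [set t' : R | 0 <= t' < t]) Omega a r t') /\
  (forall t : R, 0 <= t < 1 ->
     closure (Omega a r t) = \bigcap_(s in [set s : R | t < s <= 1]) Omega a r s).
Proof.
have a0 : 0 < a by case/andP: ha.
(* The closure of Ω_t is contained in F_t(cl Δ_t), hence in every Ω_s, s > t. *)
have closure_sub t s : 0 <= t -> t < s -> s <= 1 -> closure (Omega a r t) `<=` Omega a r s.
  move=> t0 ts s1; apply: subset_trans (@closure_Omega_sub _ a r t) _.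
  exact: cOmega_sub_Omega.
split; [|split].
- move=> t s t0 ts s1; split; last exact: closure_sub.
  apply: (@subclosed_compact _ _ (cOmega a r t)); first exact: closed_closure.
    exact: cOmega_compact.
  exact: closure_Omega_sub.
- move=> t /andP [t0 t1]; apply/seteqP; split; first exact: Omega_sub_earlier.
  move=> p [t' /andP [t'0 t't] /Omega_sub_cOmega]; exact: cOmega_sub_Omega.
- move=> t /andP [t0 t1]; apply/seteqP; split.
    by move=> p cp s /andP [ts s1]; exact: closure_sub cp.
  by move=> p /(bigcap_sub_cOmega a0 hr t0 t1); exact: cOmega_sub_closure.
Qed.
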